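(* Let $G$ be a graph and $r$ a positive integer, and assume $G$ has a pair of vertices at distance between $2$ and $r$. For a choice of non-negative reals $y_{uv}$, one for each unordered pair $\{u,v\}$ of vertices at distance between $2$ and $r$ in $G$ (not all zero), set $x_u=\max_{z:uz\in E(G)}\sum_{v\in R_r(u,z)}y_{uv}$ for each $u\in V(G)$, and let $c$ be the maximum, over all such choices, of $\frac{\sum_{\{u,v\}:2\le d_G(u,v)\le r}y_{uv}}{\sum_{v\in V(G)}x_v}$. Then every fractional $r$-guidance system and every weak $r$-guidance system of $G$ has maximum outdegree at least $c$.
   Context: All graphs are finite, simple and undirected; $d_G$ is the distance in $G$. For $u,v$ at distance $\ell$, $\Gamma_G(u,v)$ is the set of neighbors of $u$ at distance $\ell-1$ from $v$. For an edge $uz$, $R_r(u,z)$ is the set of vertices $v$ with $2\le d_G(u,v)\le r$ and $z\in\Gamma_G(u,v)$. A partial orientation of $G$ is a directed graph $\vec{H}$ on $V(G)$ with every $(u,v)\in E(\vec{H})$ satisfying $uv\in E(G)$. $B_{\vec{H}}(v,a)$ is the set of vertices reachable from $v$ by a directed path of length at most $a$. A weak $r$-guidance system is a partial orientation $\vec{H}$ such that for any distinct $u,v$ at distance $\ell\le r$ there exist non-negative integers $a,b$ with $a+b=\ell-1$ such that $G$ has an edge between $B_{\vec{H}}(u,a)$ and $B_{\vec{H}}(v,b)$. A fractional orientation assigns a non-negative real $p(u,v)$ to each ordered pair of adjacent vertices; its maximum outdegree is $\max_u\sum_{v:uv\in E(G)}p(u,v)$. A fractional $r$-guidance system is a fractional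 orientation with $\sum_{y\in\Gamma_G(u,v)}p(u,y)+\sum_{y\in\Gamma_G(v,u)}p(v,y)\ge1$ for all $u,v$ with $2\le d_G(u,v)\le r$. *)

From mathcomp Require Import all_boot all_order all_algebra.
Set Implicit Arguments. Unset Strict Implicit. Unset Printing Implicit Defensive.
Import Order.TTheory GRing.Theory Num.Theory.

Section Defs.
Variable T : finType.

Definition simple_graph (e : rel T) : Prop := symmetric e /\ irreflexive e.

Fixpoint nball (e : rel T) (k : nat) (u : T) : {set T} :=
  match k with
  | 0 => [set u]
  | k'.+1 => nball e k' u :|: [set y | [exists x in nball e k' u, e x y]]
  end.

(* Graph distance: Some l if v is reachable from u, l the least length of a
   walk from u to v; None (= infinite) otherwise.  Any reachable vertex is
   reachable within #|T|-1 steps. *)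
Definition dist (e : rel T) (u v : T) : option nat :=
  let k := find (fun k => v \in nball e k u) (iota 0 #|T|) in
  if k < #|T| then Some k else None.

Definition in_range (e : rel T) (r : nat) (u v : T) : bool :=
  if dist e u v is Some l then (2 <= l <= r) else false.

Definition Gamma (e : rel T) (u v : T) : {set T} :=
  [set y | e u y && (if dist e u v is Some l then dist e y v == Some l.-1
                     else false)].

Definition Rr (e : rel T) (r : nat) (u z : T) : {set T} :=
  [set v | in_range e r u v && (z \in Gamma e u v)].

Definition dpairs (e : rel T) (r : nat) : {set {set T}} :=
  [set p : {set T} | [exists u, exists v, in_range e r u v && (p == [set u; v])]].

Definition partial_orientation (e H : rel T) : Prop :=
  forall u v, H u v -> e u v.

Definition weak_guidance (e H : rel T) (r : nat) : Prop :=
  forall u v l, u != v -> dist e u v = Some l -> l <= r ->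
    exists a b, a + b = l.-1 /\
      exists x y, [/\ x \in nball H a u, y \in nball H b v & e x y].

Definition max_outdeg_orient (H : rel T) : nat :=
  \max_(u : T) #|[set v | H u v]|.

Variable R : realFieldType.
Local Open Scope ring_scope.

(* Fractional orientation: nonnegative weights on ordered adjacent pairs
   (values on non-adjacent pairs are irrelevant). *)
Definition fractional_orientation (e : rel T) (p : T -> T -> R) : Prop :=
  forall u v, e u v -> 0 <= p u v.

Definition max_outdeg_frac (e : rel T) (p : T -> T -> R) : R :=
  \big[Num.max/0]_(u : T) \sum_(v | e u v) p u v.

Definition frac_guidance (e : rel T) (p : T -> T -> R) (r : nat) : Prop :=
  fractional_orientation e p /\
  forall u v, in_range e r u v ->
    1 <= \sum_(y in Gamma e u v) p u y + \sum_(y in Gamma e v u) p v y.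

Definition admissible (e : rel T) (r : nat) (y : {set T} -> R) : Prop :=
  (forall q, q \in dpairs e r -> 0 <= y q) /\
  (exists2 q, q \in dpairs e r & y q != 0).

Definition xval (e : rel T) (r : nat) (y : {set T} -> R) (u : T) : R :=
  \big[Num.max/0]_(z | e u z) \sum_(v in Rr e r u z) y [set u; v].

Definition ratio (e : rel T) (r : nat) (y : {set T} -> R) : R :=
  (\sum_(q in dpairs e r) y q) / (\sum_(v : T) xval e r y v).

Definition is_max_ratio (e : rel T) (r : nat) (c : R) : Prop :=
  (exists y, admissible e r y /\ ratio e r y = c) /\
  (forall y, admissible e r y -> ratio e r y <= c).

End Defs.

From Pilot Require Import Defs.
From mathcomp Require Import all_boot all_order all_algebra.
Import Order.TTheory GRing.Theory Num.Theory.
Set Implicit Arguments. Unset Strict Implicit. Unset Printing Implicit Defensive.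

(* Double counting.  Fix a fractional r-guidance system p with maximum
   outdegree D and an admissible y.  Each pair {u,v} is guided, i.e.
   y_uv <= y_uv (A(u,v) + A(v,u)) with A(u,v) the p-weight that u sends into
   Gamma(u,v).  Summing over ordered pairs and regrouping by the first edge uz
   of the guided geodesic, the vertex u contributes
   sum_z p(u,z) sum_(v in R_r(u,z)) y_uv <= x_u sum_z p(u,z) <= x_u D, so
   sum y <= D sum x.  A weak guidance system H yields the fractional one
   p = 1_H of the same maximum outdegree: the first arc of H leaving u (or v)
   on the connecting walk of length d(u,v) lies in Gamma(u,v) (or Gamma(v,u)). *)

Section Walks.
Variable T : finType.
Implicit Types (e H : rel T) (u v w x y : T).

Lemma nballP e k u x :
  reflect (exists s, [/\ path e u s, last u s = x & size s <= k])
          (x \in nball e k u).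
Proof.
elim: k x => [|k IH] x /=.
  rewrite inE; apply: (iffP eqP) => [->|[[|? ?] [_ <- //]]].
  by exists [::].
rewrite in_setU inE; apply: (iffP orP).
  case=> [/IH [s [p l sz]]|/existsP [y /andP [/IH [s [p l sz]] eyx]]].
    by exists s; split=> //; rewrite ltnW.
  by exists (rcons s x); rewrite rcons_path last_rcons size_rcons p l eyx.
case=> s [p l sz]; have [hs|hs] := leqP (size s) k.
  by left; apply/IH; exists s.
move: p l sz hs; case/lastP: s => [//|s z].
rewrite rcons_path last_rcons size_rcons => /andP [p ez] <- sz _.
right; apply/existsP; exists (last u s); rewrite ez andbT.
by apply/IH; exists s.
Qed.

Lemma nball1 e u w : e u w -> w \in nball e 1 u.
Proof. by move=> euw; apply/nballP; exists [:: w]; rewrite /= euw. Qed.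

Lemma nball_cat e j k u x y :
  x \in nball e j u -> y \in nball e k x -> y \in nball e (j + k) u.
Proof.
move=> /nballP [s [p l sz]] /nballP [t [q l' sz']]; apply/nballP.
exists (s ++ t); rewrite cat_path last_cat p l q l' size_cat.
by split=> //; apply: leq_add.
Qed.

Lemma nball_sub e H k u x :
  subrel H e -> x \in nball H k u -> x \in nball e k u.
Proof.
move=> He /nballP [s [p l sz]]; apply/nballP; exists s.
by split=> //; apply: sub_path p.
Qed.

Lemma nball_first e k u x : x \in nball e k u -> x != u ->
  exists2 w, e u w & x \in nball e k.-1 w.
Proof.
move=> /nballP [[|w s] [p l sz]]; first by rewrite -l eqxx.
move: p => /= /andP [euw p] _.
by exists w => //; apply/nballP; exists s; split=> //; case: k sz.
Qed.

Lemma nball_sym e k u x : symmetric e -> (x \in nball e k u) = (u \in nball e k x).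
Proof.
move=> se; suff sub u' x' : x' \in nball e k u' -> u' \in nball e k x'.
  by apply/idP/idP; apply: sub.
move=> /nballP [[|w s] [p l sz]]; apply/nballP.
  by exists [::]; rewrite -l.
exists (rev (belast u' (w :: s))); split.
- by rewrite -l rev_path; apply: sub_path p => a b /=; rewrite se.
- by rewrite /= rev_cons last_rcons.
- by rewrite size_rev size_belast.
Qed.

Lemma dist_SomeP e u v l : dist e u v = Some l <->
  [/\ l < #|T|, v \in nball e l u & forall k, k < l -> v \notin nball e k u].
Proof.
rewrite /dist; set P := fun k => v \in nball e k u.
have nth_iotaT k : k < #|T| -> nth 0 (iota 0 #|T|) k = k.
  by move=> kT; rewrite nth_iota.
split.
  case: ifP => // hl [<-].
  have hP : has P (iota 0 #|T|) by rewrite has_find size_iota.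
  split=> //; first by have := nth_find 0 hP; rewrite nth_iotaT.
  move=> k hk; have := before_find 0 hk; rewrite nth_iotaT ?(ltn_trans hk hl) //.
  by rewrite /P => ->.
case=> hl vin vnot.
have hP : has P (iota 0 #|T|) by apply/hasP; exists l; rewrite ?mem_iota.
have hs := hP; rewrite has_find size_iota in hs.
suff -> : find P (iota 0 #|T|) = l by rewrite hl.
have [hlt|hgt|//] := ltngtP (find P (iota 0 #|T|)) l.
  by have := nth_find 0 hP; rewrite nth_iotaT // /P (negbTE (vnot _ hlt)).
by have := before_find 0 hgt; rewrite nth_iotaT // /P vin.
Qed.

Section Symmetric.
Variable e : rel T.
Hypothesis se : symmetric e.

Lemma dist_sym u v : dist e u v = dist e v u.
Proof.
by rewrite /dist (eq_find (a2 := fun k => u \in nball e k v)) // => k; rewrite nball_sym.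
Qed.

Lemma in_range_sym r u v : in_range e r u v = in_range e r v u.
Proof. by rewrite /in_range dist_sym. Qed.

End Symmetric.

Lemma in_range_neq e r u v : in_range e r u v -> u != v.
Proof.
rewrite /in_range; case duv: dist => [l|//] /andP [l2 _].
have /dist_SomeP [_ _ /(_ 0) vnot] := duv.
by apply: contraTneq (vnot (leq_trans _ l2)) => // ->; rewrite inE eqxx.
Qed.

Lemma Gamma_nball e u v w l :
  e u w -> dist e u v = Some l -> v \in nball e l.-1 w -> w \in Gamma e u v.
Proof.
move=> euw duv vw; have /dist_SomeP [lT _ vnot] := duv.
rewrite inE euw duv /=; apply/eqP/dist_SomeP; split=> //.
  exact: leq_ltn_trans (leq_pred l) lT.
move=> k hk; apply: contra (vnot k.+1 _) => [vk|]; last by case: l hk {duv vw vnot lT}.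
by rewrite -add1n; apply: nball_cat (nball1 euw) vk.
Qed.

Section Guidance.
Variables (e H : rel T) (r : nat).
Hypotheses (se : symmetric e) (He : subrel H e).

Lemma guided_first_arc u v x y a b l :
  dist e u v = Some l -> x \in nball H a u -> x != u ->
  y \in nball H b v -> e x y -> a + b = l.-1 ->
  exists2 w, H u w & w \in Gamma e u v.
Proof.
move=> duv xa xu yb exy ab; have [w Huw xw] := nball_first xa xu.
exists w => //; apply: Gamma_nball (He Huw) duv _.
case: a xa xw ab => [|a] xa xw ab; first by rewrite inE (negbTE xu) in xa.
have vy : v \in nball e b y by rewrite nball_sym //; apply: nball_sub yb.
have := nball_cat (nball_cat (nball_sub He xw) (nball1 exy)) vy.
by rewrite -ab addn1.
Qed.

Lemma weak_guidance_Gamma u v :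
  weak_guidance e H r -> in_range e r u v ->
  (exists2 w, H u w & w \in Gamma e u v) \/ (exists2 w, H v w & w \in Gamma e v u).
Proof.
move=> wg huv; move: (huv); rewrite /in_range; case duv: dist => [l|//] /andP [l2 lr].
have [a [b [ab [x [y [xa yb exy]]]]]] := wg u v l (in_range_neq huv) duv lr.
have [xu|xu] := eqVneq x u; last by left; apply: guided_first_arc duv xa xu yb exy ab.
right; subst x; have yv : y != v.
  have /dist_SomeP [_ _ /(_ 1 l2)] := duv.
  by apply: contraNneq => yv; rewrite -yv; apply: nball1.
apply: (guided_first_arc (l := l)) yb yv xa _ _.
- by rewrite dist_sym.
- by rewrite se.
- by rewrite addnC.
Qed.

End Guidance.
End Walks.

Local Open Scope ring_scope.

Section DoubleCounting.
Variables (T : finType) (R : realFieldType) (e : rel T) (r : nat).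
Hypothesis se : symmetric e.
Implicit Types (y : {set T} -> R) (p : T -> T -> R).

Lemma in_range_dpairs u v : in_range e r u v -> [set u; v] \in dpairs e r.
Proof.
by move=> huv; rewrite inE; apply/existsP; exists u; apply/existsP; exists v; rewrite huv eqxx.
Qed.

Lemma sum_dpairs_le_Gamma y p :
  (forall q, q \in dpairs e r -> 0 <= y q) -> frac_guidance e p r ->
  \sum_(q in dpairs e r) y q <=
  \sum_u \sum_(v | in_range e r u v) y [set u; v] * \sum_(z in Gamma e u v) p u z.
Proof.
move=> y_ge0 [p_ge0 guided].
pose F (uv : T * T) := y [set uv.1; uv.2] * \sum_(z in Gamma e uv.1 uv.2) p uv.1 z.
have F_ge0 uv : in_range e r uv.1 uv.2 -> 0 <= F uv.
  move=> huv; rewrite mulr_ge0 ?y_ge0 ?in_range_dpairs //.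
  by apply: sumr_ge0 => z; rewrite inE => /andP [/p_ge0].
rewrite (pair_big_dep xpredT (fun u v => in_range e r u v) (fun u v => F (u, v))) /=.
rewrite (partition_big (fun uv => [set uv.1; uv.2]) (mem (dpairs e r))) /=; last first.
  by case=> u v /in_range_dpairs.
apply: ler_sum => q; rewrite inE => /existsP [u /existsP [v /andP [huv /eqP qE]]].
have hvu : in_range e r v u by rewrite in_range_sym.
have uv : (u, v) != (v, u) by apply: contra_neq (in_range_neq huv) => -[].
rewrite (bigD1 (u, v)) /=; last by rewrite huv qE eqxx.
rewrite (bigD1 (v, u)) /=; last by rewrite hvu qE setUC eqxx eq_sym.
rewrite addrA ler_wpDr //.
  by apply: sumr_ge0 => -[a b] /andP [/andP [/andP [/F_ge0]]].
rewrite /F /= [[set v; u]]setUC -qE -mulrDr -{1}[y q]mulr1.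
by rewrite ler_wpM2l ?guided // y_ge0 // qE in_range_dpairs.
Qed.

Lemma sum_in_range_Gamma y p u :
  \sum_(v | in_range e r u v) y [set u; v] * \sum_(z in Gamma e u v) p u z =
  \sum_(z | e u z) (\sum_(v in Rr e r u z) y [set u; v]) * p u z.
Proof.
under eq_bigr => v _ do rewrite mulr_sumr.
rewrite (exchange_big_dep (e u)) /=; last by move=> v z _; rewrite inE => /andP [].
apply: eq_bigr => z _; rewrite mulr_suml; apply: eq_bigl => v.
by rewrite [RHS]inE.
Qed.

Lemma sum_dpairs_le_xval y p :
  (forall q, q \in dpairs e r -> 0 <= y q) -> frac_guidance e p r ->
  \sum_(q in dpairs e r) y q <= \sum_u xval e r y u * \sum_(z | e u z) p u z.
Proof.
move=> y_ge0 pg; have [p_ge0 _] := pg.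
apply: le_trans (sum_dpairs_le_Gamma y_ge0 pg) _; apply: ler_sum => u _.
rewrite sum_in_range_Gamma mulr_sumr; apply: ler_sum => z euz.
rewrite ler_wpM2r ?p_ge0 //.
exact: le_bigmax_cond (fun z => \sum_(v in Rr e r u z) y [set u; v]) euz.
Qed.

Lemma ratio_le_max_outdeg_frac y p :
  (forall q, q \in dpairs e r -> 0 <= y q) -> frac_guidance e p r ->
  Defs.ratio e r y <= max_outdeg_frac e p.
Proof.
move=> y_ge0 pg.
have D_ge0 : 0 <= max_outdeg_frac e p by apply: bigmax_ge_id.
have x_ge0 u : 0 <= xval e r y u by apply: bigmax_ge_id.
rewrite /Defs.ratio; set X := \sum_v _.
have [X0|X_gt0] := eqVneq X 0; first by rewrite X0 invr0 mulr0.
have {X_gt0}X_gt0 : 0 < X by rewrite lt_def X_gt0 sumr_ge0.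
rewrite ler_pdivrMr // mulr_sumr.
apply: le_trans (sum_dpairs_le_xval y_ge0 pg) _; apply: ler_sum => u _.
rewrite mulrC ler_wpM2r //.
exact: le_bigmax (fun u => \sum_(v | e u v) p u v) u.
Qed.

End DoubleCounting.

Section Orientations.
Variables (T : finType) (R : realFieldType) (e H : rel T) (r : nat).
Hypothesis He : partial_orientation e H.

Definition orientation_weight : T -> T -> R := fun u v => (H u v)%:R.

Lemma max_outdeg_frac_orientation :
  max_outdeg_frac e orientation_weight = (max_outdeg_orient H)%:R.
Proof.
rewrite /max_outdeg_orient (big_morph _ (natr_max R) (erefl 0%:R)).
apply: eq_bigr => u _; rewrite -sumr_const big_mkcond [RHS]big_mkcond /=.
apply: eq_bigr => v _; rewrite inE /orientation_weight.
by case: (boolP (H u v)) => [/He ->|]; case: (e u v).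
Qed.

Lemma frac_guidance_orientation :
  symmetric e -> weak_guidance e H r -> frac_guidance e orientation_weight r.
Proof.
move=> se wg; split=> [u v _|u v huv]; first exact: ler0n.
have sum_ge0 a (G : {set T}) : 0 <= \sum_(z in G) orientation_weight a z.
  by apply: sumr_ge0 => z _; apply: ler0n.
have sum_ge1 a w (G : {set T}) :
    H a w -> w \in G -> 1 <= \sum_(z in G) orientation_weight a z.
  move=> Haw wG; rewrite (bigD1 w) //= {1}/orientation_weight Haw ler_wpDr //.
  by apply: sumr_ge0 => z _; apply: ler0n.
have [[w Huw wG]|[w Hvw wG]] := weak_guidance_Gamma se He wg huv.
- by rewrite -[1]addr0 lerD ?sum_ge0 ?(sum_ge1 _ w).
- by rewrite -[1]add0r lerD ?sum_ge0 ?(sum_ge1 _ w).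
Qed.

End Orientations.

Theorem lemma28 (T : finType) (R : realFieldType) (e : rel T) (r : nat)
  (c : R) :
  simple_graph e -> (0 < r)%N ->
  (exists u v, in_range e r u v) ->
  is_max_ratio e r c ->
  (forall p : T -> T -> R, frac_guidance e p r -> c <= max_outdeg_frac e p) /\
  (forall H : rel T, partial_orientation e H -> weak_guidance e H r ->
     c <= (max_outdeg_orient H)%:R).
Proof.
move=> [se _] _ _ [[y [[y_ge0 _] <-]] _].
split=> [p|H He wg]; first exact: ratio_le_max_outdeg_frac.
rewrite -(max_outdeg_frac_orientation R He).
exact/ratio_le_max_outdeg_frac/frac_guidance_orientation.
Qed.
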